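(* Let $(P_n(x))_{n \ge 0}$ be a splitting sequence with binary string $s_0 s_1 s_2 \ldots$, and let $m \in \mathbb{N}_0$ be such that $P_m(x)$ is irreducible in $\mathbb{Z}[x]$. Then for every $k \in \mathbb{N}_0$, $P_{m+k}(x)$ divides $P_m(x^{2^\ell})$ in $\mathbb{Z}[x]$, where $\ell = |\{ i \in \{m, \dots, m+k-1\} : s_i = L\}|$.
   Context: Splitting sequence of an irreducible $P \in \mathbb{Z}[x]$: a sequence $(P_n)_{n \ge 0}$ in $\mathbb{Z}[x]$ with $P_0 = P$ such that for each $n$: if $P_n$ is irreducible in $\mathbb{Z}[x]$, then $P_{n+1}(x) = P_n(x^2)$; if $P_n$ is reducible, then (as $n \ge 1$, $P_{n-1}$ is irreducible and $P_n(x) = P_{n-1}(x^2)$ factors in $\mathbb{Z}[x]$ as a product of exactly two irreducibles) $P_{n+1}$ is one of these two irreducible factors. Its binary string is $s_0 s_1 \ldots$ with $s_n = L$ if $P_n$ is irreducible and $s_n = S$ otherwise. *)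

From mathcomp Require Import all_boot all_order all_algebra.
Set Implicit Arguments. Unset Strict Implicit. Unset Printing Implicit Defensive.
Import GRing.Theory.
Local Open Scope ring_scope.

(* NB: mathcomp's [irreducible_poly] ignores content, so it is NOT used. *)
Definition irredZ (p : {poly int}) : Prop :=
  [/\ p != 0, p \isn't a GRing.unit &
      forall q r : {poly int}, p = q * r ->
        q \is a GRing.unit \/ r \is a GRing.unit].

Definition sq_sub (p : {poly int}) : {poly int} := p \Po 'X^2.

Definition splitting_seq (P : nat -> {poly int}) : Prop :=
  irredZ (P 0%N) /\
  forall n : nat,
    (irredZ (P n) -> P n.+1 = sq_sub (P n)) /\
    (~ irredZ (P n) ->
       exists A B : {poly int}, [/\ irredZ A, irredZ B, P n = A * B &
                                   (P n.+1 = A \/ P n.+1 = B)]).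

(* Binary string of P: s n = true encodes L (P n irreducible), false encodes S. *)
Definition binary_string (P : nat -> {poly int}) (s : nat -> bool) : Prop :=
  forall n : nat, s n = true <-> irredZ (P n).

From mathcomp Require Import all_boot all_order all_algebra.
Set Implicit Arguments. Unset Strict Implicit. Unset Printing Implicit Defensive.
Import GRing.Theory.
Local Open Scope ring_scope.

(* Each step of a splitting sequence either substitutes x^2 (an L step) or
   passes to a factor (an S step), so P (n+1) divides P n (x^(2^(s n))).
   Since substituting x^(2^e) preserves products, these one-step
   divisibilities chain, and the exponents of two multiply: after k steps
   P (m+k) divides P m (x^(2^l)) with l the number of L steps. *)

Lemma comp_polyXnM (R : comNzRingType) (p : {poly R}) (a b : nat) :
  p \Po 'X^(a * b) = (p \Po 'X^a) \Po 'X^b.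
Proof. by rewrite -comp_polyA comp_Xn_poly -exprM mulnC. Qed.

Section PowerSubstitutionChain.

Variables (R : comNzRingType) (P : nat -> {poly R}) (e : nat -> nat).

Hypothesis step_dvd :
  forall n, exists Q : {poly R}, P n \Po 'X^(2 ^ e n) = Q * P n.+1.

Lemma power_substitution_chain (m k : nat) :
  exists Q : {poly R},
    P m \Po 'X^(2 ^ (\sum_(m <= i < m + k) e i)%N) = Q * P (m + k)%N.
Proof.
elim: k => [|k [Q dvd_Pm]].
  by exists 1; rewrite addn0 big_geq // expr1 comp_polyXr mul1r.
have [Q' dvd_step] := step_dvd (m + k).
exists ((Q \Po 'X^(2 ^ e (m + k))) * Q').
rewrite addnS big_nat_recr ?leq_addr //= expnD comp_polyXnM dvd_Pm.
by rewrite comp_polyM dvd_step mulrA.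
Qed.

End PowerSubstitutionChain.

Lemma splitting_seq_step_dvd (P : nat -> {poly int}) (s : nat -> bool) :
  splitting_seq P -> binary_string P s ->
  forall n, exists Q : {poly int}, P n \Po 'X^(2 ^ s n) = Q * P n.+1.
Proof.
move=> [_ split_step] string_P n.
case s_n: (s n).
- have irr_n : irredZ (P n) by apply/string_P.
  by exists 1; rewrite mul1r ((split_step n).1 irr_n).
- have red_n : ~ irredZ (P n) by move/string_P; rewrite s_n.
  have [A [B [_ _ -> [->|->]]]] := (split_step n).2 red_n;
    rewrite expr1 comp_polyXr.
  + by exists B; rewrite mulrC.
  + by exists A.
Qed.

Theorem lemma3p14 (P : nat -> {poly int}) (s : nat -> bool) (m : nat) :
  splitting_seq P -> binary_string P s -> irredZ (P m) ->
  forall k : nat,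
    let l := (\sum_(m <= i < m + k) (s i : nat))%N in
    exists Q : {poly int}, P m \Po 'X^(2 ^ l) = Q * P (m + k)%N.
Proof.
move=> split_P string_P _ k.
exact: power_substitution_chain (splitting_seq_step_dvd split_P string_P) m k.
Qed.
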